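(* For every positive integer $k$ there exists a finite simple graph $G$ such that $\chi(G)-\pi(G)\ge 2^k$.
   Context: An orthogonal vector $d$-coloring of a graph $G$ is an assignment $f:V(G)\to\mathbb{R}^d\setminus\{0\}$ such that $f(u)\perp f(v)$ whenever $uv\in E(G)$; the orthogonal number $\pi(G)$ is the minimum $d$ for which such a coloring exists. $\chi(G)$ is the chromatic number. *)

From mathcomp Require Import all_boot.
From Stdlib Require Import Reals.

Set Implicit Arguments.
Unset Strict Implicit.
Unset Printing Implicit Defensive.

Definition simple_graph (T : finType) (e : rel T) : Prop :=
  symmetric e /\ irreflexive e.

Definition proper_coloring (T : finType) (e : rel T) (c : nat) (f : T -> 'I_c) : Prop :=
  forall u v, e u v -> f u <> f v.

Definition colorable (T : finType) (e : rel T) (c : nat) : Prop :=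
  exists f : T -> 'I_c, proper_coloring e f.

Definition dotR (d : nat) (x y : 'I_d -> R) : R :=
  List.fold_right Rplus 0%R (map (fun i => (x i * y i)%R) (enum 'I_d)).

Definition nonzero_vec (d : nat) (x : 'I_d -> R) : Prop :=
  exists i : 'I_d, x i <> 0%R.

Definition orthogonal_coloring (T : finType) (e : rel T) (d : nat)
  (f : T -> 'I_d -> R) : Prop :=
  (forall v, nonzero_vec (f v)) /\ (forall u v, e u v -> dotR (f u) (f v) = 0%R).

Definition orth_colorable (T : finType) (e : rel T) (d : nat) : Prop :=
  exists f : T -> 'I_d -> R, orthogonal_coloring e f.

Definition is_least (P : nat -> Prop) (n : nat) : Prop :=
  P n /\ (forall m, P m -> n <= m).

Definition chromatic_number (T : finType) (e : rel T) (n : nat) : Prop :=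
  is_least (colorable e) n.

Definition orthogonal_number (T : finType) (e : rel T) (n : nat) : Prop :=
  is_least (orth_colorable e) n.

(* The base graph is the orthogonality graph of the 13 Yu-Oh vectors of Z^3
   (three coordinate vectors, six face diagonals, four body diagonals): two
   vertices are adjacent when their vectors are orthogonal.  By construction
   the vectors themselves form an orthogonal 3-colouring, while a finite case
   analysis shows that the graph is not 3-colourable.

   We then take the join of m copies of a graph (vertices of different copies
   are always adjacent).  In the join every copy needs its own palette of
   colours, so a graph which is not c-colourable yields a join needing at
   least m(c+1) colours; orthogonal colourings, on the other hand, combine in
   pairwise orthogonal blocks of coordinates, so an orthogonal d-colouring of
   the base graph gives an orthogonal (m d)-colouring of the join.  With
   m = 2^k copies of the Yu-Oh graph this gives chi >= 4m and pi <= 3m. *)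

From mathcomp Require Import all_boot all_algebra zify.
From mathcomp Require Import Rstruct.
From Stdlib Require Import Reals ZArith Lia Classical.

Set Implicit Arguments.
Unset Strict Implicit.
Unset Printing Implicit Defensive.

Import GRing.Theory.

Lemma least_exists (P : nat -> Prop) (n : nat) : P n -> exists l, is_least P l.
Proof.
elim/ltn_ind: n => n IH Pn.
case: (classic (exists2 m, m < n & P m)) => [[m lt_mn Pm]|no_smaller].
  exact: IH lt_mn Pm.
exists n; split=> // m Pm; rewrite leqNgt; apply/negP=> lt_mn.
by apply: no_smaller; exists m.
Qed.

Lemma colorable_card (T : finType) (e : rel T) : irreflexive e -> colorable e #|T|.
Proof.
move=> irr_e; exists enum_rank => u v e_uv /enum_rank_inj eq_uv.
by move: e_uv; rewrite eq_uv irr_e.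
Qed.

Section DotProduct.
Local Open Scope ring_scope.

Lemma dotR_sum (d : nat) (x y : 'I_d -> R) : dotR x y = \sum_(i < d) x i * y i.
Proof.
rewrite /dotR -big_enum /=.
by elim: (enum 'I_d) => [|i s IH] /=; rewrite ?big_nil ?big_cons ?IH.
Qed.

End DotProduct.

Section JoinOfCopies.

Variables (T : finType) (e : rel T) (m : nat).

Definition join_copies : rel ('I_m * T) :=
  fun x y => if x.1 == y.1 then e x.2 y.2 else true.

Lemma join_copies_simple : simple_graph e -> simple_graph join_copies.
Proof.
move=> [sym_e irr_e]; split.
- by move=> x y; rewrite /join_copies eq_sym; case: (y.1 == x.1).
- by move=> x; rewrite /join_copies eqxx.
Qed.

Section Coloring.

Variables (c n : nat) (f : 'I_m * T -> 'I_n).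
Hypotheses (not_col : ~ colorable e c) (f_proper : proper_coloring join_copies f).

Definition palette (a : 'I_m) : {set 'I_n} := [set f (a, t) | t : T].

(* Each copy uses more than c colours, otherwise re-indexing its palette
   would give a c-colouring of e. *)
Lemma palette_large (a : 'I_m) : c < #|palette a|.
Proof.
rewrite ltnNge; apply/negP=> small; apply: not_col.
have in_pal t : f (a, t) \in palette a by apply: imset_f.
have small_sub : #|{: {col | col \in palette a}}| <= c by rewrite card_sig.
pose index t := enum_rank (exist (fun col => col \in palette a) _ (in_pal t)).
exists (fun t => widen_ord small_sub (index t)).
move=> u v e_uv /(congr1 val) /= /val_inj /enum_rank_inj [].
by apply: f_proper; rewrite /join_copies /= eqxx.
Qed.

(* Different copies are completely joined, so their palettes are disjoint. *)
Lemma palettes_disjoint (a b : 'I_m) : b != a -> [disjoint palette a & palette b].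
Proof.
move=> ba; rewrite -setI_eq0; apply/eqP/setP=> col; rewrite !inE.
apply/negP=> /andP[/imsetP[u _ ->] /imsetP[v _ same]].
apply: (f_proper _ same).
by rewrite /join_copies /= eq_sym (negbTE ba).
Qed.

(* Counting the m disjoint palettes of size at least c+1 among n colours. *)
Lemma join_copies_colors : m * c.+1 <= n.
Proof.
have nonempty : set0 \notin palette @: [set: 'I_m].
  apply/imsetP=> -[a _ empty_pal]; have := palette_large a.
  by rewrite -empty_pal cards0.
have [/eqP partition_sum pal_inj] :=
  trivIimset (fun a b _ _ => @palettes_disjoint a b) nonempty.
rewrite -[m in m * _]card_ord -sum_nat_const.
apply: (@leq_trans (\sum_(a < m) #|palette a|)).
  by apply: leq_sum => a _; apply: palette_large.
have -> : \sum_(a < m) #|palette a| = #|cover (palette @: [set: 'I_m])|.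
  by rewrite -partition_sum big_imset //; apply: eq_bigl => a; rewrite inE.
by apply: leq_trans (max_card _) _; rewrite card_ord.
Qed.

End Coloring.

Section OrthogonalColoring.
Local Open Scope ring_scope.

Variables (d : nat) (g : T -> 'I_d -> R).

(* Coordinates are indexed by pairs (copy, coordinate); the vertex (a, t) is
   g t placed in the block of copy a and 0 elsewhere. *)
Definition block_vec (x : 'I_m * T) : 'I_#|{: 'I_m * 'I_d}| -> R :=
  fun j => let p := enum_val j in if p.1 == x.1 then g x.2 p.2 else 0.

Lemma block_vec_dot (x y : 'I_m * T) :
  dotR (block_vec x) (block_vec y) =
  if x.1 == y.1 then dotR (g x.2) (g y.2) else 0.
Proof.
pose F (p : 'I_m * 'I_d) :=
  (if p.1 == x.1 then g x.2 p.2 else 0) * (if p.1 == y.1 then g y.2 p.2 else 0).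
rewrite dotR_sum.
have -> : \sum_(j < #|{: 'I_m * 'I_d}|) block_vec x j * block_vec y j
          = \sum_(a < m) \sum_(r < d) F (a, r).
  by rewrite -(big_enum_val F) pair_bigA; apply: eq_big => // -[].
rewrite (bigD1 x.1) //= [X in _ + X]big1 ?addr0; last first.
  by move=> a /negbTE xa; apply: big1 => r _; rewrite /F /= xa mul0r.
rewrite /F /= eqxx dotR_sum; case: eqP => // _.
by apply: big1 => r _; rewrite mulr0.
Qed.

Lemma block_vec_nonzero (x : 'I_m * T) : nonzero_vec (g x.2) -> nonzero_vec (block_vec x).
Proof.
move=> [r gr]; exists (enum_rank (x.1, r)).
by rewrite /block_vec enum_rankK /= eqxx.
Qed.

Lemma block_vec_orthogonal :
  orthogonal_coloring e g -> orthogonal_coloring join_copies block_vec.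
Proof.
move=> [g_nonzero g_orth]; split=> [x | x y]; first exact: block_vec_nonzero.
rewrite /join_copies block_vec_dot; case: eqP => // _; exact: g_orth.
Qed.

End OrthogonalColoring.

Lemma join_copies_orth_colorable (d : nat) :
  orth_colorable e d -> orth_colorable join_copies (m * d).
Proof.
move=> [g g_orth].
have -> : m * d = #|{: 'I_m * 'I_d}| by rewrite card_prod !card_ord.
by exists (block_vec g); apply: block_vec_orthogonal.
Qed.

End JoinOfCopies.

Arguments join_copies {T} e m _ _.

Definition yu_oh_vectors : seq (Z * Z * Z) :=
  [:: (1,0,0); (0,1,0); (0,0,1); (0,1,1); (0,1,-1); (1,0,1); (1,0,-1);
      (1,1,0); (1,-1,0); (1,1,1); (-1,1,1); (1,-1,1); (1,1,-1)]%Z.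

Definition yu_oh_coord (i r : nat) : Z :=
  let '(a, b, c) := nth (0,0,0)%Z yu_oh_vectors i in
  match r with 0 => a | 1 => b | _ => c end.

Definition yu_oh_dot (i j : nat) : Z :=
  (yu_oh_coord i 0 * yu_oh_coord j 0 + yu_oh_coord i 1 * yu_oh_coord j 1
   + yu_oh_coord i 2 * yu_oh_coord j 2)%Z.

Definition yu_oh : rel 'I_13 := fun i j => Z.eqb (yu_oh_dot i j) 0.

Lemma yu_oh_dot_self (i : nat) : i < 13 -> yu_oh_dot i i <> 0%Z.
Proof.
have all_nonzero : all (fun i => ~~ Z.eqb (yu_oh_dot i i) 0) (iota 0 13) by [].
move=> lt_i13; apply/Z.eqb_neq/negbTE/(allP all_nonzero).
by rewrite mem_iota.
Qed.

Lemma yu_oh_simple : simple_graph yu_oh.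
Proof.
split=> [i j | i]; rewrite /yu_oh.
- by rewrite /yu_oh_dot; f_equal; lia.
- exact/Z.eqb_neq/yu_oh_dot_self.
Qed.

Lemma yu_oh_orth_colorable : orth_colorable yu_oh 3.
Proof.
exists (fun (i : 'I_13) (r : 'I_3) => IZR (yu_oh_coord i r)); split=> [i | i j].
- apply: NNPP => /not_ex_all_not coord_zero.
  have coord0 r : r < 3 -> yu_oh_coord i r = 0%Z.
    by move=> lt_r3; apply: eq_IZR; apply: NNPP; apply: (coord_zero (Ordinal lt_r3)).
  by apply: (yu_oh_dot_self (ltn_ord i)); rewrite /yu_oh_dot !coord0.
- move=> /Z.eqb_eq ij_orth; rewrite dotR_sum !big_ord_recr big_ord0 /=.
  by rewrite add0r -[0%R]/(IZR 0) -ij_orth /yu_oh_dot !plus_IZR !mult_IZR.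
Qed.

Ltac split_color x := destruct x as [|[|[|x]]]; try congruence; try done.

(* Exhaustive search: the 24 orthogonal pairs of Yu-Oh vectors, listed as
   hypotheses, admit no colouring with colours 0, 1, 2. *)
Lemma yu_oh_search (x0 x1 x2 x3 x4 x5 x6 x7 x8 x9 x10 x11 x12 : nat) :
  x0 < 3 -> x1 < 3 -> x2 < 3 -> x3 < 3 -> x4 < 3 -> x5 < 3 -> x6 < 3 ->
  x7 < 3 -> x8 < 3 -> x9 < 3 -> x10 < 3 -> x11 < 3 -> x12 < 3 ->
  x1 <> x0 -> x2 <> x0 -> x2 <> x1 -> x3 <> x0 -> x4 <> x0 -> x4 <> x3 ->
  x5 <> x1 -> x6 <> x1 -> x6 <> x5 -> x7 <> x2 -> x8 <> x2 -> x8 <> x7 ->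
  x9 <> x4 -> x9 <> x6 -> x9 <> x8 -> x10 <> x4 -> x10 <> x5 -> x10 <> x7 ->
  x11 <> x3 -> x11 <> x6 -> x11 <> x7 -> x12 <> x3 -> x12 <> x5 -> x12 <> x8 ->
  False.
Proof.
intros; split_color x0; split_color x1; split_color x2; split_color x3;
  split_color x4; split_color x5; split_color x6; split_color x7;
  split_color x8; split_color x9; split_color x10; split_color x11;
  split_color x12.
Qed.

Lemma yu_oh_not_3_colorable : ~ colorable yu_oh 3.
Proof.
move=> [g g_proper]; pose col i := nat_of_ord (g (inord i)).
have col_lt i : col i < 3 by apply: ltn_ord.
have col_edge i j : i < 13 -> j < 13 -> Z.eqb (yu_oh_dot i j) 0 -> col i <> col j.
  move=> lt_i lt_j ij_orth /val_inj; apply: g_proper.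
  by rewrite /yu_oh !inordK.
apply: (yu_oh_search (col_lt 0) (col_lt 1) (col_lt 2) (col_lt 3) (col_lt 4)
  (col_lt 5) (col_lt 6) (col_lt 7) (col_lt 8) (col_lt 9) (col_lt 10)
  (col_lt 11) (col_lt 12)); exact: col_edge.
Qed.

Theorem mainTheorem4 (k : nat) (hk : 0 < k) :
  exists (T : finType) (e : rel T) (chi pi : nat),
    [/\ simple_graph e, chromatic_number e chi, orthogonal_number e pi
      & 2 ^ k + pi <= chi].
Proof.
pose m := 2 ^ k; pose G := join_copies yu_oh m.
have G_simple : simple_graph G := join_copies_simple m yu_oh_simple.
have G_orth : orth_colorable G (m * 3) := join_copies_orth_colorable m yu_oh_orth_colorable.
have [chi chi_least] := least_exists (colorable_card G_simple.2).
have [pi pi_least] := least_exists G_orth.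
exists _, G, chi, pi; split=> //.
have [f f_proper] := chi_least.1.
have chi_lb : m * 4 <= chi := join_copies_colors yu_oh_not_3_colorable f_proper.
have pi_ub : pi <= m * 3 := pi_least.2 _ G_orth.
lia.
Qed.
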